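(* Let $S$ be a $\Gamma$-hemiring. If $\mu$ is a prime fuzzy h-ideal of $S$ and $x\in S$ with $x\notin\mu_0$, then $\langle x,\mu\rangle=\mu$. Conversely, let $\mu$ be a fuzzy h-ideal of $S$ with $\operatorname{Im}\mu=\{1,t\}$ for some $t\in[0,1)$; if $\langle x,\mu\rangle=\mu$ for every $x\in S$ with $\mu(x)=t$, then $\mu$ is a prime fuzzy h-ideal of $S$.
   Context: A $\Gamma$-hemiring is a pair of additive commutative semigroups with zero $S$ and $\Gamma$ with a map $S\times\Gamma\times S\to S$, $(a,\alpha,b)\mapsto a\alpha b$, such that for all $a,b,c\in S$, $\alpha,\beta\in\Gamma$: $(a+b)\alpha c=a\alpha c+b\alpha c$; $a\alpha(b+c)=a\alpha b+a\alpha c$; $a(\alpha+\beta)b=a\alpha b+a\beta b$; $a\alpha(b\beta c)=(a\alpha b)\beta c$; $0\alpha a=0=a\alpha0$; $a0b=0=b0a$. A fuzzy h-ideal of $S$ is a map $\mu:S\to[0,1]$, not identically $0$, such that for all $x,y,a,b,z\in S$, $\gamma\in\Gamma$: $\mu(x+y)\ge\min\{\mu(x),\mu(y)\}$; $\mu(x\gamma y)\ge\mu(x)$ and $\mu(x\gamma y)\ge\mu(y)$; $x+a+z=b+z$ implies $\mu(x)\ge\min\{\mu(a),\mu(b)\}$. For fuzzy subsets $\sigma,\theta$, the h-product is $(\sigma\Gamma_h\theta)(x)=\sup\min\{\sigma(a_1),\sigma(a_2),\theta(b_1),\theta(b_2)\}$, the supremum over all $z,a_1,a_2,b_1,b_2\in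 S$, $\gamma,\delta\in\Gamma$ with $x+a_1\gamma b_1+z=a_2\delta b_2+z$, and $0$ if no such expression exists. Inclusion means pointwise $\le$. A fuzzy h-ideal $\mu$ is prime if it is not constant and for any fuzzy h-ideals $\sigma,\theta$, $\sigma\Gamma_h\theta\subseteq\mu$ implies $\sigma\subseteq\mu$ or $\theta\subseteq\mu$. $\mu_0=\{x\in S:\mu(x)=\mu(0)\}$; $\operatorname{Im}\mu$ is the image of $\mu$. The extension of $\mu$ by $x$ is $\langle x,\mu\rangle(y)=\inf_{s\in S,\ \alpha,\gamma\in\Gamma}\mu(x\alpha s\gamma y)$. *)

From HB Require Import structures.
From mathcomp Require Import all_boot all_order all_algebra.
From mathcomp Require Import boolp classical_sets reals.
Set Implicit Arguments. Unset Strict Implicit. Unset Printing Implicit Defensive.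
Import Order.TTheory GRing.Theory Num.Theory.
Local Open Scope classical_set_scope.
Local Open Scope ring_scope.

Record GammaHemiring := {
  carS : Type;
  carG : Type;
  addS : carS -> carS -> carS;
  zeroS : carS;
  addG : carG -> carG -> carG;
  zeroG : carG;
  tmul : carS -> carG -> carS -> carS;
  addSA : forall a b c, addS a (addS b c) = addS (addS a b) c;
  addSC : forall a b, addS a b = addS b a;
  add0S : forall a, addS zeroS a = a;
  addGA : forall a b c, addG a (addG b c) = addG (addG a b) c;
  addGC : forall a b, addG a b = addG b a;
  add0G : forall a, addG zeroG a = a;
  tmulDl : forall a b c (al : carG), tmul (addS a b) al c = addS (tmul a al c) (tmul b al c);
  tmulDr : forall a b c (al : carG), tmul a al (addS b c) = addS (tmul a al b) (tmul a al c);
  tmulDm : forall a b (al be : carG), tmul a (addG al be) b = addS (tmul a al b) (tmul a be b);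
  tmulA : forall a b c (al be : carG), tmul a al (tmul b be c) = tmul (tmul a al b) be c;
  tmul0l : forall a (al : carG), tmul zeroS al a = zeroS;
  tmul0r : forall a (al : carG), tmul a al zeroS = zeroS;
  tmul0m : forall a b, tmul a zeroG b = zeroS /\ tmul b zeroG a = zeroS
}.

Section Fuzzy.
Variables (R : realType) (H : GammaHemiring).
Local Notation S := (carS H).
Local Notation Gm := (carG H).
Local Notation sadd := (@addS H).
Local Notation mul := (@tmul H).

Definition fuzzy_subset (mu : S -> R) : Prop := forall x, 0 <= mu x <= 1.

Definition fuzzy_h_ideal (mu : S -> R) : Prop :=
  [/\ fuzzy_subset mu,
      exists x, mu x <> 0,
      forall x y, Num.min (mu x) (mu y) <= mu (sadd x y),
      forall x y (g : Gm), mu x <= mu (mul x g y) /\ mu y <= mu (mul x g y)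
    & forall x a b z, sadd (sadd x a) z = sadd b z -> Num.min (mu a) (mu b) <= mu x].

Definition hprod_vals (sigma theta : S -> R) (x : S) : set R :=
  [set r | exists z a1 a2 b1 b2 (g d : Gm),
       sadd (sadd x (mul a1 g b1)) z = sadd (mul a2 d b2) z /\
       r = Num.min (Num.min (sigma a1) (sigma a2)) (Num.min (theta b1) (theta b2))].

Definition hprod (sigma theta : S -> R) (x : S) : R :=
  if `[< hprod_vals sigma theta x !=set0 >] then sup (hprod_vals sigma theta x) else 0.

Definition fsub (sigma mu : S -> R) : Prop := forall x, sigma x <= mu x.

Definition prime_fuzzy_h_ideal (mu : S -> R) : Prop :=
  [/\ fuzzy_h_ideal mu,
      ~ (exists c, forall x, mu x = c)
    & forall sigma theta, fuzzy_h_ideal sigma -> fuzzy_h_ideal theta ->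
        fsub (hprod sigma theta) mu -> fsub sigma mu \/ fsub theta mu].

Definition fext (x : S) (mu : S -> R) : S -> R :=
  fun y => inf [set r | exists s (al ga : Gm), r = mu (mul (mul x al s) ga y)].
End Fuzzy.

From HB Require Import structures.
From mathcomp Require Import all_boot all_order all_algebra.
From mathcomp Require Import boolp classical_sets reals.
Set Implicit Arguments. Unset Strict Implicit. Unset Printing Implicit Defensive.
Import Order.TTheory GRing.Theory Num.Theory.
Local Open Scope classical_set_scope.
Local Open Scope ring_scope.

(* For a prime [mu] and [x] with [mu x <> mu 0], take [theta = <x, mu>] and
   [sigma] the indicator (with height [mu 0]) of the residual
   [(mu : theta) = {a | a Gamma theta <= mu}], an h-ideal.  Then
   [sigma Gamma_h theta <= mu], so primality gives [theta <= mu], whence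
   [theta = mu] because [mu <= <x, mu>] always; or [sigma <= mu], which says
   [mu (x g s) = mu 0] for all [g, s], and primality applied once more to the
   residual [(mu : mu 0)] gives [mu x = mu 0].
   Conversely, if [sigma a > mu a] and [theta b > mu b] then [mu a] and
   [mu b] are below [1], so [mu a = mu b = t] and [<a, mu> b = mu b] is
   below [min (sigma a) (theta b)]; hence so is [mu w] for some
   [w = a al s ga b], while [(sigma Gamma_h theta) w >= min (sigma a) (theta b)]. *)

Section FuzzyHIdeals.
Variables (R : realType) (H : GammaHemiring).
Local Notation S := (carS H).
Local Notation sadd := (@addS H).
Local Notation mul := (@tmul H).
Local Notation z0 := (@zeroS H).
Local Notation g0 := (@zeroG H).
Implicit Types (mu nu sg th : S -> R) (P : S -> Prop) (c t : R).

Lemma fuzzy_h_ideal_ge0 mu y : fuzzy_h_ideal mu -> 0 <= mu y.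
Proof. by case=> /(_ y) /andP[]. Qed.

Lemma fuzzy_h_ideal_le1 mu y : fuzzy_h_ideal mu -> mu y <= 1.
Proof. by case=> /(_ y) /andP[]. Qed.

Lemma fuzzy_h_ideal_mulr mu a g b : fuzzy_h_ideal mu -> mu a <= mu (mul a g b).
Proof. by case=> _ _ _ /(_ a b g) []. Qed.

Lemma fuzzy_h_ideal_mull mu a g b : fuzzy_h_ideal mu -> mu b <= mu (mul a g b).
Proof. by case=> _ _ _ /(_ a b g) []. Qed.

Lemma fuzzy_h_ideal_le0 mu y : fuzzy_h_ideal mu -> mu y <= mu z0.
Proof. by move/(fuzzy_h_ideal_mull z0 g0 y); rewrite tmul0l. Qed.

Lemma fuzzy_h_ideal_at0 mu : fuzzy_h_ideal mu -> 0 < mu z0 <= 1.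
Proof.
move=> hmu; rewrite fuzzy_h_ideal_le1 // andbT.
have [_ [y /eqP muy] _ _ _] := hmu.
by apply: lt_le_trans (fuzzy_h_ideal_le0 y hmu); rewrite lt_neqAle eq_sym muy
  fuzzy_h_ideal_ge0.
Qed.

Lemma cst_h_ideal c : 0 < c <= 1 -> fuzzy_h_ideal (fun _ : S => c).
Proof.
by move=> /andP[c0 c1]; split=> [x||x y|x y g|x a b z _];
  rewrite ?minxx ?(ltW c0) //; exists z0; apply/eqP; rewrite gt_eqF.
Qed.

Definition h_ideal_set P : Prop :=
  [/\ P z0,
      forall a b, P a -> P b -> P (sadd a b),
      forall a g b, P a \/ P b -> P (mul a g b)
    & forall x a b z, sadd (sadd x a) z = sadd b z -> P a -> P b -> P x].

Definition findicator P c : S -> R := fun a => if `[< P a >] then c else 0.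

Lemma findicator_h_ideal P c : 0 < c <= 1 -> h_ideal_set P ->
  fuzzy_h_ideal (findicator P c).
Proof.
move=> /andP[c0 c1] [P0 PD PM Ph]; rewrite /findicator.
have le_c (b : bool) : (if b then c else 0) <= c by case: b; rewrite ?lexx ?ltW.
split.
- by move=> x; case: asboolP; rewrite ?lexx ?ler01 ?(ltW c0).
- by exists z0; rewrite asboolT //; apply/eqP; rewrite gt_eqF.
- move=> x y; case: (asboolP (P (sadd x y))) => Pxy; first by rewrite ge_min le_c.
  by case: (asboolP (P x)) => Px; case: (asboolP (P y)) => Py;
    rewrite ?minxx ?ge_min ?lexx ?orbT //; case: Pxy; apply: PD.
- move=> x y g; case: (asboolP (P (mul x g y))) => Pxy; first by rewrite !le_c.
  by split; [case: (asboolP (P x)) => Pu | case: (asboolP (P y)) => Pu];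
    rewrite ?lexx //; case: Pxy; apply: PM; [left | right].
- move=> x a b z E; case: (asboolP (P x)) => Px; first by rewrite ge_min le_c.
  by case: (asboolP (P a)) => Pa; case: (asboolP (P b)) => Pb;
    rewrite ?minxx ?ge_min ?lexx ?orbT //; case: Px; apply: Ph E Pa Pb.
Qed.

Definition fquot mu nu (a : S) : Prop := forall g b, nu b <= mu (mul a g b).

Lemma fquot_h_ideal_set mu nu : fuzzy_h_ideal mu -> fuzzy_h_ideal nu ->
  (forall b, nu b <= mu z0) -> h_ideal_set (fquot mu nu).
Proof.
move=> hmu hnu nu_le; have [_ _ mu_add _ mu_h] := hmu; split.
- by move=> g b; rewrite tmul0l.
- move=> a1 a2 P1 P2 g b; rewrite tmulDl; apply: le_trans (mu_add _ _).
  by rewrite le_min P1 P2.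
- move=> a g' d [Pa | Pd] g b; rewrite -tmulA.
    exact: le_trans (fuzzy_h_ideal_mull _ _ _ hnu) (Pa _ _).
  exact: le_trans (Pd g b) (fuzzy_h_ideal_mull _ _ _ hmu).
- move=> x a b z E Pa Pb g w.
  have := congr1 (fun u => mul u g w) E; rewrite /= !tmulDl => Ew.
  by apply: le_trans (mu_h _ _ _ _ Ew); rewrite le_min Pa Pb.
Qed.

Lemma fsub_hprod mu sg th : fuzzy_h_ideal mu ->
  (forall a g b, Num.min (sg a) (th b) <= mu (mul a g b)) ->
  fsub (hprod sg th) mu.
Proof.
move=> hmu prod_le w; have [_ _ _ _ mu_h] := hmu; rewrite /hprod.
case: asboolP => [vals_ne|_]; last exact: fuzzy_h_ideal_ge0.
apply: ge_sup => // _ [z [a1 [a2 [b1 [b2 [g [d [E ->]]]]]]]].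
apply: le_trans (mu_h _ _ _ _ E); rewrite le_min.
by rewrite !(le_trans _ (prod_le _ _ _)) // le_min !ge_min !lexx !orbT.
Qed.

Lemma hprod_ge_mul sg th a g b : fuzzy_h_ideal sg ->
  Num.min (sg a) (th b) <= hprod sg th (mul a g b).
Proof.
move=> hsg; set v := Num.min (Num.min (sg z0) (sg a)) (Num.min (th b) (th b)).
have v_in : hprod_vals sg th (mul a g b) v.
  exists z0, z0, a, b, b, g, g; split => //.
  by rewrite tmul0l [sadd _ z0]addSC add0S.
have -> : Num.min (sg a) (th b) = v.
  by rewrite /v minxx; congr Num.min; apply/esym/min_idPr/fuzzy_h_ideal_le0.
rewrite /hprod asboolT; last by exists v.
apply: ub_le_sup => //; exists 1 => _ [z [a1 [a2 [b1 [b2 [g' [d [_ ->]]]]]]]].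
by rewrite !ge_min fuzzy_h_ideal_le1.
Qed.

Lemma prime_fquot mu nu : prime_fuzzy_h_ideal mu -> fuzzy_h_ideal nu ->
  (forall b, nu b <= mu z0) ->
  fsub nu mu \/ (forall a, fquot mu nu a -> mu a = mu z0).
Proof.
move=> [hmu _ mu_prime] hnu nu_le.
set sg := findicator (fquot mu nu) (mu z0).
have hsg : fuzzy_h_ideal sg.
  by apply: findicator_h_ideal; [exact: fuzzy_h_ideal_at0 | exact: fquot_h_ideal_set].
have : fsub (hprod sg nu) mu.
  apply: fsub_hprod => // a g b; rewrite /sg /findicator.
  case: asboolP => [Pa | _]; first by rewrite ge_min Pa orbT.
  by rewrite ge_min fuzzy_h_ideal_ge0.
case/(mu_prime _ _ hsg hnu) => [sg_sub | ]; [right | by left].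
move=> a Pa; apply/eqP; rewrite eq_le fuzzy_h_ideal_le0 //.
by have := sg_sub a; rewrite /sg /findicator asboolT.
Qed.

Lemma prime_eq_at0 mu a : prime_fuzzy_h_ideal mu ->
  (forall g b, mu z0 <= mu (mul a g b)) -> mu a = mu z0.
Proof.
move=> pmu Pa; have [hmu _ _] := pmu; have h0 := fuzzy_h_ideal_at0 hmu.
case: (prime_fquot pmu (cst_h_ideal h0) (fun=> lexx _)) => [/(_ a) mu0_le | ].
  by apply/eqP; rewrite eq_le mu0_le fuzzy_h_ideal_le0.
exact.
Qed.

Lemma fext_ne mu x y :
  [set r | exists s al ga, r = mu (mul (mul x al s) ga y)] !=set0.
Proof. by exists (mu (mul (mul x g0 z0) g0 y)), z0, g0, g0. Qed.

Lemma fext_le mu x y s al ga : fuzzy_h_ideal mu ->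
  fext x mu y <= mu (mul (mul x al s) ga y).
Proof.
move=> hmu; apply: ge_inf; last by exists s, al, ga.
by exists 0 => _ [s' [al' [ga' ->]]]; apply: fuzzy_h_ideal_ge0.
Qed.

Lemma fext_ge mu x y c : (forall s al ga, c <= mu (mul (mul x al s) ga y)) ->
  c <= fext x mu y.
Proof. by move=> c_le; apply: lb_le_inf (fext_ne _ _ _) _ => _ [s [al [ga ->]]]. Qed.

Lemma fext_lt mu x y c : fext x mu y < c ->
  exists s al ga, mu (mul (mul x al s) ga y) < c.
Proof. by case/(inf_lt (fext_ne _ _ _)) => _ [s [al [ga ->]]]; exists s, al, ga. Qed.

Lemma le_fext mu x y : fuzzy_h_ideal mu -> mu y <= fext x mu y.
Proof. by move=> hmu; apply: fext_ge => s al ga; apply: fuzzy_h_ideal_mull. Qed.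

Lemma fext_h_ideal mu x : fuzzy_h_ideal mu -> fuzzy_h_ideal (fext x mu).
Proof.
move=> hmu; have [_ [y0 muy0] mu_add _ mu_h] := hmu.
have min_fext_le y1 y2 s al ga :
    Num.min (fext x mu y1) (fext x mu y2) <=
    Num.min (mu (mul (mul x al s) ga y1)) (mu (mul (mul x al s) ga y2)).
  by rewrite le_min !ge_min !fext_le ?orbT.
split.
- move=> y; rewrite (le_trans (fext_le x y z0 g0 g0 hmu)) ?fuzzy_h_ideal_le1 //.
  by rewrite andbT fext_ge // => s al ga; apply: fuzzy_h_ideal_ge0.
- exists y0; apply/eqP; rewrite gt_eqF // (lt_le_trans _ (le_fext x y0 hmu)) //.
  by rewrite lt_neqAle eq_sym fuzzy_h_ideal_ge0 // andbT; apply/eqP.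
- move=> y1 y2; apply: fext_ge => s al ga; rewrite tmulDr.
  exact: le_trans (min_fext_le _ _ s al ga) (mu_add _ _).
- move=> y1 y2 g; split; apply: fext_ge => s al ga; rewrite tmulA.
    exact: le_trans (fext_le _ _ _ _ _ hmu) (fuzzy_h_ideal_mulr _ _ _ hmu).
  by rewrite -[mul (mul x al s) ga y1]tmulA fext_le.
- move=> y a b z E; apply: fext_ge => s al ga.
  have := congr1 (mul (mul x al s) ga) E; rewrite !tmulDr => Ew.
  exact: le_trans (min_fext_le _ _ s al ga) (mu_h _ _ _ _ Ew).
Qed.

Lemma prime_fext_id mu x : prime_fuzzy_h_ideal mu -> mu x <> mu z0 ->
  fext x mu = mu.
Proof.
move=> pmu mux; have [hmu _ _] := pmu; have hext := fext_h_ideal x hmu.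
have ext_le0 b : fext x mu b <= mu z0.
  exact: le_trans (fext_le x b z0 g0 g0 hmu) (fuzzy_h_ideal_le0 _ hmu).
case: (prime_fquot pmu hext ext_le0) => [ext_sub | quot_at0].
  by apply/funext => y; apply/eqP; rewrite eq_le ext_sub le_fext.
case: mux; apply: prime_eq_at0 => // g s.
by rewrite quot_at0 // => al y; apply: fext_le.
Qed.

Lemma not_fsub_hprod mu sg th a b : fuzzy_h_ideal sg ->
  fext a mu b < Num.min (sg a) (th b) -> ~ fsub (hprod sg th) mu.
Proof.
move=> hsg /fext_lt [s [al [ga mu_lt]]] /(_ (mul (mul a al s) ga b)).
apply/negP; rewrite -ltNge (lt_le_trans mu_lt) // (le_trans _ (hprod_ge_mul _ _ _ _ hsg)) //.
by rewrite le_min !ge_min lexx fuzzy_h_ideal_mulr ?orbT.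
Qed.

Lemma prime_of_fext_id mu t : fuzzy_h_ideal mu -> t < 1 ->
  range mu = [set 1; t] -> (forall x, mu x = t -> fext x mu = mu) ->
  prime_fuzzy_h_ideal mu.
Proof.
move=> hmu t1 rmu ext_id.
have mu_lt1 a : mu a < 1 -> mu a = t.
  have : range mu (mu a) by exists a.
  by rewrite rmu => -[-> | ->]; rewrite ?ltxx.
split => //.
  move=> [c mu_cst]; have : range mu 1 by rewrite rmu; left.
  have : range mu t by rewrite rmu; right.
  by move=> [a _ mua] [b _ mub]; move: t1; rewrite -mua -mub !mu_cst ltxx.
move=> sg th hsg hth sub.
case: (pselect (fsub sg mu)) => [|/existsNP [a /negP]]; first by left.
case: (pselect (fsub th mu)) => [|/existsNP [b /negP]]; first by right.
rewrite -!ltNge => lt_b lt_a; exfalso.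
have mua : mu a = t by apply/mu_lt1/(lt_le_trans lt_a)/fuzzy_h_ideal_le1.
have mub : mu b = t by apply/mu_lt1/(lt_le_trans lt_b)/fuzzy_h_ideal_le1.
apply: (not_fsub_hprod (a := a) (b := b) hsg _ sub).
by rewrite ext_id // lt_min lt_b mub -mua lt_a.
Qed.

End FuzzyHIdeals.

Theorem theorem3p21 (R : realType) (H : GammaHemiring) :
  (forall mu : carS H -> R, prime_fuzzy_h_ideal mu ->
     forall x : carS H, mu x <> mu (@zeroS H) -> fext x mu = mu) /\
  (forall (mu : carS H -> R) (t : R), fuzzy_h_ideal mu ->
     0 <= t < 1 -> range mu = [set 1; t] ->
     (forall x : carS H, mu x = t -> fext x mu = mu) ->
     prime_fuzzy_h_ideal mu).
Proof.
split=> [mu pmu x | mu t hmu /andP[_ t1]]; first exact: prime_fext_id.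
exact: prime_of_fext_id.
Qed.
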